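(* Let $T\in\mathrm{Aut}(X,\mu)$, let $P\in\mathrm{Aut}(X,\mu)$ be periodic with fundamental domain $D$, and set $U=T_DP$. Then: (i) $U_D=T_D$; (ii) for almost every $x\in D$, the first return time of $U$ to $D$ at $x$, $\min\{n\ge1:U^n(x)\in D\}$, equals the cardinality of the $P$-orbit of $x$; (iii) if moreover $P\in[T]$, then $T$ and $U$ have the same orbits.
   Context: $(X,\mu)$ standard atomless probability space; $\mathrm{Aut}(X,\mu)$ measure-preserving transformations modulo null sets. $P$ is periodic if almost every $P$-orbit is finite; a fundamental domain of $P$ is a measurable set meeting almost every $P$-orbit in exactly one point. $[T]$ is the set of $V\in\mathrm{Aut}(X,\mu)$ with $V(x)$ in the $T$-orbit of $x$ for a.e. $x$. For $V\in\mathrm{Aut}(X,\mu)$ and measurable $B$, the first return map $V_B$ is $V_B(x)=V^{n(x)}(x)$ with $n(x)=\min\{n\ge1:V^n(x)\in B\}$ for $x\in B$, and $V_B(x)=x$ for $x\notin B$. Having the same orbits means the orbits of a.e. point coincide. *)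

From HB Require Import structures.
From mathcomp Require Import all_boot all_order all_algebra.
From mathcomp Require Import all_classical all_reals all_analysis.
Set Implicit Arguments. Unset Strict Implicit. Unset Printing Implicit Defensive.
Import Order.TTheory GRing.Theory Num.Theory.
Local Open Scope classical_set_scope.
Local Open Scope ring_scope.

Section Defs.
Context {d : measure_display} {X : measurableType d} {R : realType}.

Definition atomless (mu : set X -> \bar R) : Prop :=
  forall A, measurable A -> (0 < mu A)%E ->
    exists B, [/\ measurable B, B `<=` A, (0 < mu B)%E & (mu B < mu A)%E].

Definition mp_aut (mu : set X -> \bar R) (V : X -> X) : Prop :=
  exists W : X -> X, [/\ cancel V W, cancel W V,
    measurable_fun setT V, measurable_fun setT W &
    forall A, measurable A -> mu (V @^-1` A) = mu A].

(** the V-orbitV of x (V a bijection): all V^n x, n in Z *)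
Definition orbitV (V : X -> X) (x : X) : set X :=
  [set y | exists n : nat, iter n V x = y \/ iter n V y = x].

Definition is_return_time (V : X -> X) (B : set X) (x : X) (n : nat) : Prop :=
  [/\ (0 < n)%N, B (iter n V x) &
      forall m, (0 < m)%N -> (m < n)%N -> ~ B (iter m V x)].

(** first return time (0 if V never returns to B) *)
Definition return_time (V : X -> X) (B : set X) (x : X) : nat :=
  xget 0%N (is_return_time V B x).

Definition first_return (V : X -> X) (B : set X) (x : X) : X :=
  if `[< B x >] then iter (return_time V B x) V x else x.

Definition is_periodic (mu : set X -> \bar R) (P : X -> X) : Prop :=
  {ae mu, forall x, finite_set (orbitV P x)}.

Definition fund_domain (mu : set X -> \bar R) (P : X -> X) (D : set X)
  : Prop :=
  measurable D /\ {ae mu, forall x, exists! y, orbitV P x y /\ D y}.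

Definition in_fullgroup (mu : set X -> \bar R) (T V : X -> X) : Prop :=
  {ae mu, forall x, orbitV T x (V x)}.

End Defs.

From HB Require Import structures.
From mathcomp Require Import all_boot all_order all_algebra.
From mathcomp Require Import all_classical all_reals all_analysis.
Set Implicit Arguments. Unset Strict Implicit. Unset Printing Implicit Defensive.
Local Open Scope classical_set_scope.
Local Open Scope ring_scope.
Local Open Scope card_scope.

(* Let x be in D, with P-orbit a cycle of length k meeting D only at x.
   Along this cycle U = T_D o P agrees with P until the cycle closes, so
   U^j x = P^j x for j < k and U^k x = T_D x: the first return time of U to D
   is k, the size of the P-orbit, and U_D = T_D.  If P is in [T], U moves
   points inside T-orbits; conversely each point of a T-orbit is reached by U
   from the D-point of its P-orbit, and the D-points of a T-orbit are linked by
   iterates of T_D = U_D.  All of this holds along almost every T-orbit since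
   T and its inverse preserve null sets. *)

Section Orbits.
Context {d : measure_display} {X : measurableType d}.
Variable V : X -> X.

Lemma orbitV_refl x : orbitV V x x.
Proof. by exists 0%N; left. Qed.

Lemma orbitV_sym x y : orbitV V x y -> orbitV V y x.
Proof. by case=> n [e|e]; exists n; [right|left]. Qed.

Lemma orbitV_iter x n : orbitV V x (iter n V x).
Proof. by exists n; left. Qed.

Lemma orbitV_iter2 z m n : orbitV V (iter m V z) (iter n V z).
Proof.
case: (leqP m n) => [mn|nm].
  by exists (n - m)%N; left; rewrite -iterD subnK.
by exists (m - n)%N; right; rewrite -iterD subnK // ltnW.
Qed.

Lemma iter_periodM x p k : iter p V x = x -> iter (k * p) V x = x.
Proof. by move=> px; elim: k => [|k IH] //; rewrite mulSn iterD IH. Qed.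

Definition min_period x k := [/\ (0 < k)%N, iter k V x = x &
  forall m, (0 < m)%N -> (m < k)%N -> iter m V x <> x].

Hypothesis injV : injective V.

Lemma iter_inj n : injective (iter n V).
Proof. by elim: n => [|n IH] x y //= /injV; exact: IH. Qed.

Lemma iterD_inj m n x y : iter (m + n) V x = iter m V y -> iter n V x = y.
Proof. by rewrite iterD => /iter_inj. Qed.

Lemma iter_sub_fixed x m n : (m < n)%N -> iter m V x = iter n V x ->
  iter (n - m) V x = x.
Proof.
by move=> mn e; apply: (@iterD_inj m); rewrite subnKC ?(ltnW mn) // e.
Qed.

Lemma orbitV_trans x y z : orbitV V x y -> orbitV V y z -> orbitV V x z.
Proof.
move=> [n [<-|e]] [m [<-|f]].
- by exists (m + n)%N; left; rewrite iterD.
- case: (leqP n m) => [nm|mn].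
    by exists (m - n)%N; right; apply: (@iterD_inj n); rewrite subnKC.
  by exists (n - m)%N; left; apply: (@iterD_inj m); rewrite subnKC // ltnW.
- by rewrite -e; exact: orbitV_iter2.
- by exists (n + m)%N; right; rewrite iterD f.
Qed.

Lemma orbitV_period x p y : (0 < p)%N -> iter p V x = x -> orbitV V x y ->
  exists2 m, (m < p)%N & iter m V x = y.
Proof.
move=> p0 px.
have iter_mod n : iter n V x = iter (n %% p) V x.
  by rewrite {1}(divn_eq n p) addnC iterD iter_periodM.
case=> n [<-|e]; first by exists (n %% p)%N; rewrite ?ltn_mod -?iter_mod.
exists ((n * p - n) %% p)%N; first by rewrite ltn_mod.
rewrite -iter_mod; apply: (@iterD_inj n).
by rewrite subnKC ?leq_pmulr // e iter_periodM.
Qed.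

Lemma finite_orbitV_period x : finite_set (orbitV V x) ->
  exists2 p, (0 < p)%N & iter p V x = x.
Proof.
move=> finx; apply: contrapT => noperiod.
have inj_iter : {in [set: nat] &, injective ((fun n => iter n V x))}.
  move=> m n _ _ /= e; apply: contrapT => /eqP; rewrite neq_ltn => /orP[] lt.
    by apply: noperiod; exists (n - m)%N; rewrite ?subn_gt0 ?iter_sub_fixed.
  by apply: noperiod; exists (m - n)%N; rewrite ?subn_gt0 ?iter_sub_fixed.
apply: infinite_nat; rewrite -(eq_finite_set (inj_card_eq inj_iter)).
by apply: sub_finite_set finx => _ [n _ <-]; exact: orbitV_iter.
Qed.

Lemma finite_orbitV_min_period x : finite_set (orbitV V x) ->
  exists k, min_period x k.
Proof.
move=> /finite_orbitV_period[p p0 px].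
have exP : exists n, `[< (0 < n)%N /\ iter n V x = x >].
  by exists p; apply/asboolP.
case: (ex_minnP exP) => k /asboolP[k0 kx] kmin; exists k; split=> // m m0 mk mx.
by have := kmin m (asboolT (conj m0 mx)); rewrite leqNgt mk.
Qed.

Lemma min_period_card x k : min_period x k -> orbitV V x #= `I_k.
Proof.
move=> [k0 kx kmin].
have -> : orbitV V x = (fun n => iter n V x) @` `I_k.
  apply/seteqP; split=> [y /(orbitV_period k0 kx)[m mk <-]|_ [m _ <-]].
    by exists m.
  exact: orbitV_iter.
apply: inj_card_eq => m n; rewrite !in_setE /= => mk nk e.
apply: contrapT => /eqP; rewrite neq_ltn => /orP[] lt.
  by apply: (kmin (n - m)%N); rewrite ?subn_gt0 ?iter_sub_fixed //;
    exact: leq_ltn_trans (leq_subr _ _) nk.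
by apply: (kmin (m - n)%N); rewrite ?subn_gt0 ?iter_sub_fixed //;
  exact: leq_ltn_trans (leq_subr _ _) mk.
Qed.

End Orbits.

Section FirstReturn.
Context {d : measure_display} {X : measurableType d}.
Variables (V : X -> X) (B : set X).

Lemma first_return_notin x : ~ B x -> first_return V B x = x.
Proof. by move=> Bx; rewrite /first_return asboolF. Qed.

Lemma first_return_in x :
  B x -> first_return V B x = iter (return_time V B x) V x.
Proof. by move=> Bx; rewrite /first_return asboolT. Qed.

Lemma is_return_time_unique x m n :
  is_return_time V B x m -> is_return_time V B x n -> m = n.
Proof.
case=> m0 Bm mmin [n0 Bn nmin]; apply/eqP; rewrite eqn_leq.
by apply/andP; split; rewrite leqNgt; apply/negP => lt;
  [exact: mmin n n0 lt Bn|exact: nmin m m0 lt Bm].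
Qed.

Lemma return_timeE x n : is_return_time V B x n -> return_time V B x = n.
Proof. by move=> xn; exact: is_return_time_unique (xgetI 0%N xn) xn. Qed.

(* If [x] never returns to [B], [return_time] is the junk value 0, so
   [first_return] fixes [x]. *)
Lemma first_return_mem x : B x -> B (first_return V B x).
Proof.
move=> Bx; rewrite first_return_in //.
have [[n xn]|noret] := pselect (exists n, is_return_time V B x n).
  by rewrite (return_timeE xn); case: xn.
by rewrite /return_time xgetPN // => n xn; apply: noret; exists n.
Qed.

Lemma orbitV_first_return x : orbitV V x (first_return V B x).
Proof.
have [Bx|Bx] := pselect (B x).
  by rewrite first_return_in //; exact: orbitV_iter.
by rewrite first_return_notin //; exact: orbitV_refl.
Qed.

Lemma iter_first_return_mem j x : B x -> B (iter j (first_return V B) x).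
Proof. by move=> Bx; elim: j => [|j IH] //=; exact: first_return_mem. Qed.

Lemma orbitV_iter_first_return (injV : injective V) j x :
  orbitV V x (iter j (first_return V B) x).
Proof.
elim: j => [|j IH]; first exact: orbitV_refl.
exact: (orbitV_trans injV IH (orbitV_first_return _)).
Qed.

Lemma iter_first_return m x : B x -> B (iter m V x) ->
  exists j, iter j (first_return V B) x = iter m V x.
Proof.
elim/ltn_ind: m x => m IH x Bx Bm.
have [->|m0] := posnP m; first by exists 0%N.
have exP : exists n, `[< (0 < n)%N /\ B (iter n V x) >].
  by exists m; apply/asboolP.
case: (ex_minnP exP) => r /asboolP[r0 Br] rmin.
have rm : (r <= m)%N by apply: rmin; apply/asboolP.
have xr : is_return_time V B x r.
  split=> // n n0 nr Bn.
  by have := rmin n (asboolT (conj n0 Bn)); rewrite leqNgt nr.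
have mE : iter m V x = iter (m - r) V (iter r V x) by rewrite -iterD subnK.
have [|||j rj] := IH (m - r)%N _ (iter r V x) => //.
- by rewrite ltn_subrL r0.
- by rewrite -mE.
by exists j.+1; rewrite iterSr first_return_in // (return_timeE xr) rj -mE.
Qed.

End FirstReturn.

Section InducedMap.
Context {d : measure_display} {X : measurableType d}.
Variables (T P : X -> X) (D : set X).
Local Notation U := (first_return T D \o P).

Section Cycle.
Variables (z : X) (k : nat).
Hypotheses (Dz : D z) (zk : min_period P z k)
  (uniqD : exists! y, orbitV P z y /\ D y).

Lemma iter_cycle_notin m : (0 < m)%N -> (m < k)%N -> ~ D (iter m P z).
Proof.
move=> m0 mk Dm; case: zk => _ _ kmin; apply: (kmin m m0 mk).
case: uniqD => y [_ yuniq].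
rewrite -(yuniq _ (conj (orbitV_iter _ _ _) Dm)).
by rewrite (yuniq _ (conj (orbitV_refl _ _) Dz)).
Qed.

Lemma iter_induced j : (j < k)%N -> iter j U z = iter j P z.
Proof.
elim: j => [|j IH] // jk; rewrite iterS IH ?(ltnW jk) //= -iterS.
by rewrite first_return_notin //; exact: iter_cycle_notin.
Qed.

Lemma iter_induced_period : iter k U z = first_return T D z.
Proof.
case: zk => k0 kz _; have kE : k = k.-1.+1 by rewrite prednK.
rewrite kE iterS iter_induced; last by rewrite {2}kE.
by rewrite /= -iterS -kE kz.
Qed.

Lemma is_return_time_induced : is_return_time U D z k.
Proof.
case: zk => k0 _ _; split=> //.
  by rewrite iter_induced_period; exact: first_return_mem.
by move=> m m0 mk; rewrite iter_induced ?(ltnW mk) //; exact: iter_cycle_notin.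
Qed.

Lemma first_return_induced : first_return U D z = first_return T D z.
Proof.
rewrite first_return_in // (return_timeE is_return_time_induced).
exact: iter_induced_period.
Qed.

End Cycle.

Section SameOrbits.
Hypotheses (injT : injective T) (injP : injective P).
Variable x : X.
Local Notation S := (orbitV T x).
Hypothesis orbitT_good : forall w, S w -> [/\ finite_set (orbitV P w),
  exists! y, orbitV P w y /\ D y & orbitV T w (P w)].

Lemma orbitT_closed_iter_P w n : S w -> S (iter n P w).
Proof.
move=> Sw; elim: n => [|n IH] //; rewrite iterS.
by case: (orbitT_good IH) => _ _ wP; exact: (orbitV_trans injT IH wP).
Qed.

Lemma orbitT_closed_orbit_P w v : S w -> orbitV P w v -> S v.
Proof.
move=> Sw wv; have [finw _ _] := orbitT_good Sw.
have [p p0 pw] := finite_orbitV_period injP finw.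
by have [m _ <-] := orbitV_period injP p0 pw wv; exact: orbitT_closed_iter_P.
Qed.

Lemma orbitT_closed_induced w : S w -> S (U w).
Proof.
move=> Sw; have [_ _ wP] := orbitT_good Sw.
exact: (orbitV_trans injT (orbitV_trans injT Sw wP) (orbitV_first_return _ _ _)).
Qed.

Lemma orbitT_closed_induced_inv w : S (U w) -> S w.
Proof.
move=> SUw; apply: orbitT_closed_orbit_P (orbitV_trans injT SUw _) _.
  exact: orbitV_sym (orbitV_first_return _ _ _).
by exists 1%N; right.
Qed.

Lemma orbitT_closed_iter_induced_inv n w : S (iter n U w) -> S w.
Proof.
elim: n w => [|n IH] w //; rewrite iterSr => /IH.
exact: orbitT_closed_induced_inv.
Qed.

Lemma orbit_induced_sub_orbitT : orbitV U x `<=` S.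
Proof.
move=> y [n [<-|e]].
  elim: n => [|n IH]; first exact: orbitV_refl.
  by rewrite iterS; exact: orbitT_closed_induced.
by apply: (@orbitT_closed_iter_induced_inv n); rewrite e; exact: orbitV_refl.
Qed.

Lemma orbitT_induced_root w :
  S w -> exists w0 i, [/\ S w0, D w0 & iter i U w0 = w].
Proof.
move=> Sw; have [_ [w0 [[ww0 Dw0] _]] _] := orbitT_good Sw.
have Sw0 := orbitT_closed_orbit_P Sw ww0.
have [finw0 uniq0 _] := orbitT_good Sw0.
have [k w0k] := finite_orbitV_min_period injP finw0; have [k0 kw0 _] := w0k.
have [m mk <-] := orbitV_period injP k0 kw0 (orbitV_sym ww0).
by exists w0, m; rewrite (iter_induced Dw0 w0k uniq0 mk).
Qed.

Lemma iter_first_return_induced z j : S z -> D z ->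
  exists M, iter M U z = iter j (first_return T D) z.
Proof.
move=> Sz Dz; elim: j => [|j [M ME]]; first by exists 0%N.
have Sj := orbitV_trans injT Sz (orbitV_iter_first_return D injT j z).
have [finj uniqj _] := orbitT_good Sj.
have [k jk] := finite_orbitV_min_period injP finj.
exists (k + M)%N; rewrite iterD ME.
by rewrite (iter_induced_period (iter_first_return_mem _ _ Dz) jk uniqj) iterS.
Qed.

Lemma induced_connect a b : S a -> D a -> S b -> D b ->
  (exists M, iter M U a = b) \/ (exists M, iter M U b = a).
Proof.
move=> Sa Da Sb Db.
have [n [abn|ban]] := orbitV_trans injT (orbitV_sym Sa) Sb.
  have [j jE] := iter_first_return Da (eq_ind_r D Db abn).
  by left; rewrite -abn -jE; exact: iter_first_return_induced.
have [j jE] := iter_first_return Db (eq_ind_r D Da ban).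
by right; rewrite -ban -jE; exact: iter_first_return_induced.
Qed.

Lemma orbitT_sub_orbit_induced : S `<=` orbitV U x.
Proof.
move=> y Sy.
have [x0 [i [Sx0 Dx0 xE]]] := orbitT_induced_root (orbitV_refl T x).
have [y0 [j [Sy0 Dy0 <-]]] := orbitT_induced_root Sy.
rewrite -xE; case: (induced_connect Sx0 Dx0 Sy0 Dy0) => -[M <-];
  by rewrite -iterD; exact: orbitV_iter2.
Qed.

Lemma orbitV_induced : orbitV T x = orbitV U x.
Proof.
apply/seteqP; split; first exact: orbitT_sub_orbit_induced.
exact: orbit_induced_sub_orbitT.
Qed.

End SameOrbits.

End InducedMap.

Lemma iter_can {T : Type} (V W : T -> T) n :
  cancel V W -> cancel (iter n V) (iter n W).
Proof. by move=> VW; elim: n => [|n IH] x //; rewrite iterSr iterS VW IH. Qed.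

Section AlmostEverywhere.
Context {d : measure_display} {X : measurableType d} {R : realType}.
Variable mu : {measure set X -> \bar R}.

Lemma ae_comp_preserving (V : X -> X) (Q : X -> Prop) :
  measurable_fun setT V -> (forall A, measurable A -> mu (V @^-1` A) = mu A) ->
  {ae mu, forall x, Q x} -> {ae mu, forall x, Q (V x)}.
Proof.
move=> mV pV [N [mN N0 QN]]; exists (V @^-1` N); split=> //.
- by rewrite -[_ @^-1` _]setTI; exact: mV.
- by rewrite pV.
- by move=> x /= /QN.
Qed.

Lemma ae_iter_preserving (V : X -> X) (Q : X -> Prop) n :
  measurable_fun setT V -> (forall A, measurable A -> mu (V @^-1` A) = mu A) ->
  {ae mu, forall x, Q x} -> {ae mu, forall x, Q (iter n V x)}.
Proof.
move=> mV pV; elim: n Q => [|n IH] Q // aeQ.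
by apply: filterS (ae_comp_preserving mV pV (IH Q aeQ)) => x; rewrite iterSr.
Qed.

Lemma ae_orbitV (V : X -> X) (Q : X -> Prop) : mp_aut mu V ->
  {ae mu, forall x, Q x} -> {ae mu, forall x y, orbitV V x y -> Q y}.
Proof.
move=> [W [VW WV mV mW pV]] aeQ.
have pW A : measurable A -> mu (W @^-1` A) = mu A.
  move=> mA; rewrite -pV; last by rewrite -[_ @^-1` _]setTI; exact: mW.
  by congr (mu _); apply/seteqP; split=> y /=; rewrite VW.
have aeQVW n : {ae mu, forall x, Q (iter n V x) /\ Q (iter n W x)}.
  exact: filterS2 (ae_iter_preserving n mV pV aeQ)
                  (ae_iter_preserving n mW pW aeQ).
apply: filterS (ae_foralln aeQVW) => x QVW y [n [<-|e]]; first by case: (QVW n).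
have <- : iter n W x = y by rewrite -e iter_can.
by case: (QVW n).
Qed.

End AlmostEverywhere.

Theorem mainTheorem20 (d : measure_display) (X : measurableType d)
  (R : realType) (mu : probability X R) (Hatom : atomless mu)
  (T P : X -> X) (D : set X)
  (hT : mp_aut mu T) (hP : mp_aut mu P) (hper : is_periodic mu P)
  (hD : fund_domain mu P D) :
  let U := first_return T D \o P in
  [/\ {ae mu, forall x, first_return U D x = first_return T D x},
      {ae mu, forall x, D x -> exists n : nat,
          is_return_time U D x n /\ orbitV P x #= `I_n}
    & in_fullgroup mu T P ->
      {ae mu, forall x, orbitV T x = orbitV U x}].
Proof.
rewrite /=; have [[W [TW _ _ _ _]] [Q [PQ _ _ _ _]]] := (hT, hP).
have injT := can_inj TW; have injP := can_inj PQ.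
have [_ aeD] := hD; split.
- apply: filterS2 hper aeD => x finx uniqx.
  have [Dx|Dx] := pselect (D x); last by rewrite !first_return_notin.
  have [k xk] := finite_orbitV_min_period injP finx.
  exact: first_return_induced Dx xk uniqx.
- apply: filterS2 hper aeD => x finx uniqx Dx.
  have [k xk] := finite_orbitV_min_period injP finx.
  by exists k; split; [exact: is_return_time_induced|exact: min_period_card].
- move=> hF.
  have aegood : {ae mu, forall w, [/\ finite_set (orbitV P w),
      exists! y, orbitV P w y /\ D y & orbitV T w (P w)]}.
    by apply: filterS3 hper aeD hF => w; split.
  by apply: filterS (ae_orbitV hT aegood) => x; exact: orbitV_induced.
Qed.
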